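(* Let $m$ be an odd integer, $n\ge 0$ an integer, and let $x$ be one of the $n+1$ consecutive odd integers $m,m+2,\ldots,m+2n$. Then these $n+1$ integers can be arranged in a sequence $y_1,y_2,\ldots,y_{n+1}$ (each used exactly once) with $y_{n+1}=x$ such that for every $k=2,\ldots,n+1$, $|y_k-y_{k-1}|=2^{s_k}$ for some integer $s_k\ge 1$. *)

From mathcomp Require Import all_boot all_order all_algebra.
Set Implicit Arguments. Unset Strict Implicit. Unset Printing Implicit Defensive.
Import Order.TTheory GRing.Theory Num.Theory.
Local Open Scope ring_scope.

Definition odd_run (m : int) (n : nat) : seq int :=
  [seq m + (2 * i)%:Z | i <- iota 0 n.+1].

From mathcomp Require Import all_boot all_order all_algebra.
From mathcomp Require Import zify.
Import Order.TTheory GRing.Theory Num.Theory.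
Local Open Scope ring_scope.

(* Writing the run as m + 2i for i = 0, ..., n, it suffices to walk through
   the indices 0, ..., n, ending at the index j of x, with every step of
   length 1 or 2: the corresponding gaps are then 2 or 4.  Such a walk is
   built by induction on n, keeping it started at n (or at n - 1 when it ends
   at j = n).  For j <= n, prepend n + 1 to the walk for n; for j = n + 1,
   take the walk for n ending at n - 1, which starts at n, and append n + 1. *)

Definition short_step (a b : nat) : bool := (`|a - b| \in [:: 1; 2])%N.

Lemma short_step_walk_iota (n j : nat) : (j <= n)%N ->
  exists x0 p, [/\ perm_eq (x0 :: p) (iota 0 n.+1), path short_step x0 p,
    last x0 p = j & x0 = if (j < n)%N then n else n.-1].
Proof.
elim: n j => [|n IH] j le_jn; first by exists 0%N, [::]; case: j le_jn.
have iotaSr : iota 0 n.+2 = rcons (iota 0 n.+1) n.+1.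
  by rewrite -cats1 -addn1 iotaD.
have [le_jn1 | lt_nj] := leqP j n.
  have [x0 [p [perm_p walk_p last_p x0E]]] := IH j le_jn1.
  exists n.+1, (x0 :: p); split => //; last by rewrite ltnS le_jn1.
  - by rewrite iotaSr perm_sym perm_rcons perm_cons perm_sym.
  - rewrite /= walk_p andbT /short_step !inE x0E.
    by case: ifP => _; apply/orP; lia.
have eq_jn : j = n.+1 by lia.
subst j; case: n {IH le_jn lt_nj iotaSr} (IH) (iotaSr) => [_ _|n IH iotaSr].
  by exists 0%N, [:: 1%N].
have [x0 [p [perm_p walk_p last_p]]] := IH n (leqnSn n).
rewrite ltnSn => x0E; subst x0.
exists n.+1, (rcons p n.+2); split; last by rewrite ltnn.
- by rewrite iotaSr -rcons_cons perm_sym perm_rcons perm_sym perm_rcons perm_cons.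
- by rewrite rcons_path walk_p last_p /short_step !inE; apply/orP; lia.
- by rewrite last_rcons.
Qed.

Lemma short_step_double_gap (m : int) (a b : nat) : short_step a b ->
  exists s : nat, (1 <= s)%N /\ `|(m + (2 * b)%:Z) - (m + (2 * a)%:Z)| = 2 ^+ s.
Proof.
rewrite /short_step !inE => /orP[] /eqP dist_ab.
- by exists 1%N; split => //; lia.
- by exists 2%N; split => //; lia.
Qed.

Theorem lemma4p5 (m : int) (n : nat) (x : int) :
  ~~ (2 %| m)%Z -> x \in odd_run m n ->
  exists y : seq int,
    [/\ perm_eq y (odd_run m n),
        last 0 y = x &
        forall k : nat, (k < n)%N ->
          exists s : nat, (1 <= s)%N /\
            `|nth 0 y k.+1 - nth 0 y k| = 2 ^+ s].
Proof.
move=> _ /mapP[j]; rewrite mem_iota add0n ltnS => /andP[_ le_jn] ->.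
have [x0 [p [perm_p walk_p last_p _]]] := @short_step_walk_iota n j le_jn.
have size_p : size p = n by have := perm_size perm_p; rewrite size_iota => -[].
pose f (i : nat) := m + (2 * i)%:Z.
exists (map f (x0 :: p)); split; first by rewrite perm_map.
  by rewrite /= last_map last_p.
move=> k lt_kn; have := pathP 0%N walk_p k; rewrite size_p => /(_ lt_kn).
rewrite -[nth 0%N p k]/(nth 0%N (x0 :: p) k.+1).
rewrite !(nth_map 0%N) /= ?size_p ?ltnS ?lt_kn ?(ltnW lt_kn) //.
exact: short_step_double_gap.
Qed.
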